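(* Let $\kappa\ge3$ be an integer and let $U=\begin{bmatrix} c_{RR} & c_{LR}\\ c_{RL} & c_{LL}\end{bmatrix}\in\mathrm{U}(2)$ satisfy $\overline{c_{LR}}\,\det U=2/\kappa-1$. Consider the Type II quantum walk $Y^\kappa_t$ with coin $U$, initial state $|0,L\rangle$ and reflection phase $\gamma=0$ (Case A) or $\gamma=\pi$ (Case B); this walk describes the distance from the origin of the quantum walk on the $\kappa$-regular tree $\mathbb{T}_\kappa$ started at the root with uniform initial coin state (Case A) or with initial coin state $\kappa^{-1/2}(1,e^{2\pi i/\kappa},\dots,e^{2\pi i(\kappa-1)/\kappa})$ (Case B). Then for every $x\in\{0,1,2,\dots\}$, as $t\to\infty$, $$P(Y_t^\kappa=x)-\frac{1+(-1)^{t+x}}{2}\times\begin{cases}C(\kappa), & x=0,\\ \kappa\, C(\kappa)\left(\frac{1}{\kappa-1}\right)^x, & x>0,\end{cases}\ \longrightarrow 0,$$ where $C(\kappa)=0$ in Case A and $C(\kappa)=\left(\frac{\kappa-2}{\kappa-1}\right)^2$ in Case B.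
   Context: Type II quantum walk: Hilbert space with orthonormal basis $\{|0,L\rangle\}\cup\{|x,R\rangle,|x,L\rangle: x\ge1\}$; unitary evolution $W$ given by $W|0,L\rangle=e^{i\gamma}|1,R\rangle$ and, for $x\ge1$, $W|x,R\rangle=c_{RR}|x+1,R\rangle+c_{LR}|x-1,L\rangle$, $W|x,L\rangle=c_{RL}|x+1,R\rangle+c_{LL}|x-1,L\rangle$ (with $|0,L\rangle$ as $|x-1,L\rangle$ when $x=1$). $P(Y_t^\kappa=x)=\sum_e|\langle e,W^t|0,L\rangle\rangle|^2$, summed over basis vectors $e$ at position $x$ (only $|0,L\rangle$ for $x=0$; $|x,R\rangle,|x,L\rangle$ for $x\ge1$). Equivalently, the parameter $b=\overline{c_{LR}}\det(U)e^{-i\gamma}$ equals $-1+2/\kappa$ in Case A and $1-2/\kappa$ in Case B. *)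

From Stdlib Require Import Reals.
Open Scope R_scope.

Record Cpx := mkC { Re : R; Im : R }.

Definition C0 : Cpx := mkC 0 0.
Definition C1 : Cpx := mkC 1 0.
Definition Cadd (z w : Cpx) : Cpx := mkC (Re z + Re w) (Im z + Im w).
Definition Csub (z w : Cpx) : Cpx := mkC (Re z - Re w) (Im z - Im w).
Definition Cmul (z w : Cpx) : Cpx :=
  mkC (Re z * Re w - Im z * Im w) (Re z * Im w + Im z * Re w).
Definition Cconj (z : Cpx) : Cpx := mkC (Re z) (- Im z).
Definition Cnorm2 (z : Cpx) : R := Re z * Re z + Im z * Im z.
Definition Cexpi (theta : R) : Cpx := mkC (cos theta) (sin theta).
Definition RtoC (r : R) : Cpx := mkC r 0.

Definition unitary2 (cRR cLR cRL cLL : Cpx) : Prop :=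
  Cadd (Cmul cRR (Cconj cRR)) (Cmul cLR (Cconj cLR)) = C1 /\
  Cadd (Cmul cRR (Cconj cRL)) (Cmul cLR (Cconj cLL)) = C0 /\
  Cadd (Cmul cRL (Cconj cRR)) (Cmul cLL (Cconj cLR)) = C0 /\
  Cadd (Cmul cRL (Cconj cRL)) (Cmul cLL (Cconj cLL)) = C1.

Definition det2 (cRR cLR cRL cLL : Cpx) : Cpx :=
  Csub (Cmul cRR cLL) (Cmul cLR cRL).

(* Amplitudes of W^t |0,L>.  amp t x true = <x,R| W^t |0,L>,
   amp t x false = <x,L| W^t |0,L>.  The coordinate (0,R) does not exist
   and its amplitude is identically 0.  ph = e^{i gamma}. *)
Fixpoint amp (cRR cLR cRL cLL ph : Cpx) (t : nat) (x : nat) (s : bool) : Cpx :=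
  match t with
  | O => match x, s with O, false => C1 | _, _ => C0 end
  | S t' =>
    if s then
      match x with
      | O => C0
      | S O => Cmul ph (amp cRR cLR cRL cLL ph t' O false)
      | S y => Cadd (Cmul cRR (amp cRR cLR cRL cLL ph t' y true))
                    (Cmul cRL (amp cRR cLR cRL cLL ph t' y false))
      end
    else
      Cadd (Cmul cLR (amp cRR cLR cRL cLL ph t' (S x) true))
           (Cmul cLL (amp cRR cLR cRL cLL ph t' (S x) false))
  end.

Definition probY (cRR cLR cRL cLL : Cpx) (gamma : R) (t x : nat) : R :=
  let ph := Cexpi gamma in
  match x with
  | O => Cnorm2 (amp cRR cLR cRL cLL ph t O false)
  | _ => Cnorm2 (amp cRR cLR cRL cLL ph t x true)
         + Cnorm2 (amp cRR cLR cRL cLL ph t x false)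
  end.

Definition limit_profile (kappa : nat) (Ck : R) (t x : nat) : R :=
  (1 + (-1) ^ (t + x)) / 2 *
  match x with
  | O => Ck
  | _ => INR kappa * Ck * (1 / (INR kappa - 1)) ^ x
  end.

Definition C_caseB (kappa : nat) : R :=
  ((INR kappa - 2) / (INR kappa - 1)) ^ 2.

(* The generating functions in [t] of the amplitudes are algebraic: the generating function [rho]
   of a first passage one step towards the origin solves a quadratic equation, and the return
   amplitude [L] is a rational function of [rho].  Under the hypothesis on the coin the
   discriminant of that quadratic is [(1 - eps^2 d^2 x^2) (1 - conj(eps)^2 d^2 x^2)] with
   [|eps| = 1], [d^2 = det U], and [L] solves
   [2 (ph + b) (1 - d^2 x^2) L = 2 b + ph (1 - d^2 x^2 + S)], [S] the square root of the
   discriminant.  The Taylor coefficients of [sqrt (1 - x^2)] are absolutely summable, so the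
   coefficients of [S], stripped of the phase [d^n], sum to [|1 - eps^2| = - 2 b]; summing the
   resulting recursion for the coefficients of [L] gives [L_t ~ ell d^t] along even [t], where
   [ell = 0] when [ph = 1].  Solving the walk recursion backwards in [x] then shows that the
   amplitudes at distance [x] approach the bound state [ell d^t r^x]; its squared modulus is
   the limit profile. *)

From Stdlib Require Import Reals Lra Lia FunctionalExtensionality.
From Coquelicot Require Import Hierarchy Lim_seq Series.
Open Scope R_scope.

(** * Complex arithmetic *)

Lemma Cpx_ext (z w : Cpx) : Re z = Re w -> Im z = Im w -> z = w.
Proof. destruct z, w; simpl; intros -> ->; reflexivity. Qed.

Ltac Cext := apply Cpx_ext; simpl; try ring.

Definition Copp (z : Cpx) : Cpx := mkC (- Re z) (- Im z).
Definition Cinv (z : Cpx) : Cpx := mkC (Re z / Cnorm2 z) (- Im z / Cnorm2 z).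
Definition Cdiv (z w : Cpx) : Cpx := Cmul z (Cinv w).

Lemma Cring_theory : ring_theory C0 C1 Cadd Cmul Csub Copp (@eq Cpx).
Proof. constructor; intros; Cext. Qed.

Lemma Cnorm2_nonneg z : 0 <= Cnorm2 z.
Proof. unfold Cnorm2; nra. Qed.

Lemma Cnorm2_pos z : z <> C0 -> 0 < Cnorm2 z.
Proof.
  destruct z as [a c]; unfold Cnorm2; simpl; intros Hz.
  destruct (Req_dec a 0), (Req_dec c 0); subst; [now destruct Hz | nra..].
Qed.

Lemma Cneq0_of_norm2 z : 0 < Cnorm2 z -> z <> C0.
Proof. intros H ->; unfold Cnorm2 in H; simpl in H; lra. Qed.

Lemma Cfield_theory : field_theory C0 C1 Cadd Cmul Csub Copp Cdiv Cinv (@eq Cpx).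
Proof.
  constructor.
  - exact Cring_theory.
  - intros E; apply (f_equal Re) in E; simpl in E; lra.
  - reflexivity.
  - intros z Hz; pose proof (Cnorm2_pos z Hz).
    unfold Cinv, Cnorm2 in *; Cext; field; lra.
Qed.
Add Field Cfield : Cfield_theory.

Lemma Cmul_cancel_l c z w : c <> C0 -> Cmul c z = Cmul c w -> z = w.
Proof.
  intros Hc E. transitivity (Cdiv (Cmul c z) c); [field; exact Hc|].
  rewrite E; field; exact Hc.
Qed.

Lemma Cmul_neq0 z w : z <> C0 -> w <> C0 -> Cmul z w <> C0.
Proof.
  intros Hz Hw E. apply Hw, (Cmul_cancel_l z); [exact Hz|]. rewrite E; ring.
Qed.

Lemma C1_neq0 : C1 <> C0.
Proof. intros E; apply (f_equal Re) in E; simpl in E; lra. Qed.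

Lemma C2_neq0 : Cadd C1 C1 <> C0.
Proof. intros E; apply (f_equal Re) in E; simpl in E; lra. Qed.

Lemma RtoC_add a c : RtoC (a + c) = Cadd (RtoC a) (RtoC c).
Proof. Cext. Qed.

Lemma Cconj_sub z w : Cconj (Csub z w) = Csub (Cconj z) (Cconj w).
Proof. Cext. Qed.
Lemma Cconj_mul z w : Cconj (Cmul z w) = Cmul (Cconj z) (Cconj w).
Proof. Cext. Qed.
Lemma Cconj_RtoC a : Cconj (RtoC a) = RtoC a.
Proof. Cext. Qed.
Lemma Cconj_involutive z : Cconj (Cconj z) = z.
Proof. Cext. Qed.
Lemma Cmul_conj z : Cmul z (Cconj z) = RtoC (Cnorm2 z).
Proof. unfold Cnorm2; Cext. Qed.

Lemma Cnorm2_mul z w : Cnorm2 (Cmul z w) = Cnorm2 z * Cnorm2 w.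
Proof. unfold Cnorm2; simpl; ring. Qed.
Lemma Cnorm2_RtoC a : Cnorm2 (RtoC a) = a * a.
Proof. unfold Cnorm2; simpl; ring. Qed.
Lemma Cnorm2_conj z : Cnorm2 (Cconj z) = Cnorm2 z.
Proof. unfold Cnorm2; simpl; ring. Qed.
Lemma Cnorm2_inv z : z <> C0 -> Cnorm2 (Cinv z) = / Cnorm2 z.
Proof. intros Hz; pose proof (Cnorm2_pos z Hz); unfold Cinv, Cnorm2 in *; simpl; field; lra. Qed.

Fixpoint Cpow (z : Cpx) (n : nat) : Cpx :=
  match n with O => C1 | S n => Cmul z (Cpow z n) end.

Lemma Cpow_add z m n : Cpow z (m + n) = Cmul (Cpow z m) (Cpow z n).
Proof. induction m; simpl; [ring | rewrite IHm; ring]. Qed.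
Lemma Cpow_mul z w n : Cpow (Cmul z w) n = Cmul (Cpow z n) (Cpow w n).
Proof. induction n; simpl; [ring | rewrite IHn; ring]. Qed.
Lemma Cpow_C1 n : Cpow C1 n = C1.
Proof. induction n; simpl; [reflexivity | rewrite IHn; ring]. Qed.
Lemma Cnorm2_pow z n : Cnorm2 (Cpow z n) = Cnorm2 z ^ n.
Proof. induction n; simpl; [unfold Cnorm2; simpl; ring | rewrite Cnorm2_mul, IHn; ring]. Qed.
Lemma Cconj_pow z n : Cconj (Cpow z n) = Cpow (Cconj z) n.
Proof. induction n; simpl; [Cext | rewrite Cconj_mul, IHn; reflexivity]. Qed.

Lemma Cpow_conj_unit d n : Cnorm2 d = 1 -> Cmul (Cpow (Cconj d) n) (Cpow d n) = C1.
Proof.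
  intros Hd. rewrite <- Cpow_mul, <- (Cpow_C1 n). f_equal.
  transitivity (Cmul d (Cconj d)); [ring|]. rewrite Cmul_conj, Hd; reflexivity.
Qed.

Fixpoint csum (f : nat -> Cpx) (n : nat) : Cpx :=
  match n with O => C0 | S n => Cadd (csum f n) (f n) end.

Lemma csum_ext f g n : (forall i, (i < n)%nat -> f i = g i) -> csum f n = csum g n.
Proof.
  induction n; intros H; simpl; [reflexivity|].
  rewrite IHn, H; [reflexivity | lia | intros; apply H; lia].
Qed.

Lemma csum_add f g n : csum (fun i => Cadd (f i) (g i)) n = Cadd (csum f n) (csum g n).
Proof. induction n; simpl; [ring | rewrite IHn; ring]. Qed.
Lemma csum_sub f g n : csum (fun i => Csub (f i) (g i)) n = Csub (csum f n) (csum g n).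
Proof. induction n; simpl; [ring | rewrite IHn; ring]. Qed.
Lemma csum_scal_l c f n : csum (fun i => Cmul c (f i)) n = Cmul c (csum f n).
Proof. induction n; simpl; [ring | rewrite IHn; ring]. Qed.
Lemma csum_scal_r c f n : csum (fun i => Cmul (f i) c) n = Cmul (csum f n) c.
Proof. induction n; simpl; [ring | rewrite IHn; ring]. Qed.

Lemma csum_zero f n : (forall i, (i < n)%nat -> f i = C0) -> csum f n = C0.
Proof. induction n; intros H; simpl; [reflexivity | rewrite IHn, H; [ring | lia | intros; apply H; lia]]. Qed.

Lemma csum_first f n : csum f (S n) = Cadd (f O) (csum (fun i => f (S i)) n).
Proof. induction n; [simpl; ring | cbn [csum] in *; rewrite IHn; ring]. Qed.

Lemma csum_rev f n : csum (fun i => f (n - i)%nat) (S n) = csum f (S n).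
Proof.
  revert f; induction n; intros f; [reflexivity|].
  rewrite (csum_first f), <- IHn.
  change (csum (fun i => f (S n - i)%nat) (S (S n)))
    with (Cadd (csum (fun i => f (S n - i)%nat) (S n)) (f (S n - S n)%nat)).
  rewrite Nat.sub_diag, (csum_ext _ (fun i => f (S (n - i))))
    by (intros i Hi; f_equal; lia).
  ring.
Qed.

Lemma csum_triangle (G : nat -> nat -> Cpx) N :
  csum (fun k => csum (fun i => G i (k - i)%nat) (S k)) N =
  csum (fun i => csum (G i) (N - i)) N.
Proof.
  induction N; [reflexivity|].
  change (csum (fun k => csum (fun i => G i (k - i)%nat) (S k)) (S N))
    with (Cadd (csum (fun k => csum (fun i => G i (k - i)%nat) (S k)) N)
               (csum (fun i => G i (N - i)%nat) (S N))).
  rewrite IHN, (csum_ext (fun i => csum (G i) (S N - i))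
                  (fun i => Cadd (csum (G i) (N - i)) (G i (N - i)%nat)))
    by (intros i Hi; replace (S N - i)%nat with (S (N - i)) by lia; reflexivity).
  cbn [csum]. rewrite csum_add, Nat.sub_diag. cbn [csum]. ring.
Qed.

(** * Formal power series *)

Definition ser := nat -> Cpx.
Definition s0 : ser := fun _ => C0.
Definition s1 : ser := fun n => match n with O => C1 | _ => C0 end.
Definition sadd (a c : ser) : ser := fun n => Cadd (a n) (c n).
Definition sopp (a : ser) : ser := fun n => Copp (a n).
Definition ssub (a c : ser) : ser := fun n => Csub (a n) (c n).
Definition smul (a c : ser) : ser :=
  fun n => csum (fun i => Cmul (a i) (c (n - i)%nat)) (S n).
Definition X : ser := fun n => match n with 1%nat => C1 | _ => C0 end.
Definition cs (z : Cpx) : ser := fun n => match n with O => z | _ => C0 end.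

Lemma smul_comm a c : smul a c = smul c a.
Proof.
  apply functional_extensionality; intros n; unfold smul.
  rewrite <- csum_rev. apply csum_ext; intros i Hi.
  replace (n - (n - i))%nat with i by lia. ring.
Qed.

Lemma smul_assoc a c e : smul a (smul c e) = smul (smul a c) e.
Proof.
  apply functional_extensionality; intros n; unfold smul.
  set (G i j := Cmul (a i) (Cmul (c j) (e (n - i - j)%nat))).
  transitivity (csum (fun i => csum (G i) (S n - i)) (S n)).
  - apply csum_ext; intros i Hi. rewrite <- csum_scal_l.
    replace (S n - i)%nat with (S (n - i)) by lia. reflexivity.
  - rewrite <- csum_triangle. apply csum_ext; intros k Hk.
    rewrite <- csum_scal_r. apply csum_ext; intros i Hi. unfold G.
    replace (n - i - (k - i))%nat with (n - k)%nat by lia. ring.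
Qed.

Lemma smul_distr_l a c e : smul (sadd a c) e = sadd (smul a e) (smul c e).
Proof.
  apply functional_extensionality; intros n; unfold smul, sadd.
  rewrite <- csum_add. apply csum_ext; intros; ring.
Qed.

Lemma s1_smul a : smul s1 a = a.
Proof.
  apply functional_extensionality; intros n; unfold smul.
  rewrite csum_first, csum_zero by (intros; simpl; ring). simpl. rewrite Nat.sub_0_r; ring.
Qed.

Lemma ser_ring_theory : ring_theory s0 s1 sadd smul ssub sopp (@eq ser).
Proof.
  constructor; intros;
    try (apply functional_extensionality; intros; unfold sadd, ssub, sopp, s0; ring).
  - apply s1_smul.
  - apply smul_comm.
  - apply smul_assoc.
  - apply smul_distr_l.
Qed.
Add Ring ser_ring : ser_ring_theory.

Lemma ssub_eq0 a c : ssub a c = s0 -> a = c.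
Proof.
  intros H; apply functional_extensionality; intros n.
  transitivity (Cadd (ssub a c n) (c n)); [unfold ssub; ring | rewrite H; unfold s0; ring].
Qed.

Lemma ssub_of_eq a c : a = c -> ssub a c = s0.
Proof. intros ->; ring. Qed.

Lemma smul_coef0 a c : smul a c O = Cmul (a O) (c O).
Proof. unfold smul; simpl; ring. Qed.

Lemma cs_smul_coef z a n : smul (cs z) a n = Cmul z (a n).
Proof.
  unfold smul. rewrite csum_first, csum_zero by (intros; simpl; ring).
  simpl. rewrite Nat.sub_0_r; ring.
Qed.

Lemma X_smul_coefS a n : smul X a (S n) = a n.
Proof.
  unfold smul. rewrite !csum_first, csum_zero by (intros; simpl; ring).
  simpl. rewrite Nat.sub_0_r; ring.
Qed.

Lemma X_smul_coef0 a : smul X a O = C0.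
Proof. rewrite smul_coef0; simpl; ring. Qed.

Lemma cs_add z w : cs (Cadd z w) = sadd (cs z) (cs w).
Proof. apply functional_extensionality; intros [|n]; unfold sadd; simpl; ring. Qed.
Lemma cs_sub z w : cs (Csub z w) = ssub (cs z) (cs w).
Proof. apply functional_extensionality; intros [|n]; unfold ssub; simpl; ring. Qed.
Lemma cs_mul z w : cs (Cmul z w) = smul (cs z) (cs w).
Proof. apply functional_extensionality; intros n; rewrite cs_smul_coef; destruct n; simpl; ring. Qed.
Lemma cs_C1 : cs C1 = s1.
Proof. apply functional_extensionality; intros [|n]; reflexivity. Qed.

Local Notation two := (sadd s1 s1).

Lemma cs_RtoC2 : cs (RtoC 2) = two.
Proof. apply functional_extensionality; intros [|n]; unfold sadd; simpl; Cext. Qed.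

Lemma smul_eq0 a c : smul a c = s0 -> c O <> C0 -> a = s0.
Proof.
  intros H Hc.
  assert (Ha : forall n m, (m <= n)%nat -> a m = C0).
  { induction n as [|n IH]; intros m Hm.
    - assert (m = O) as -> by lia.
      pose proof (f_equal (fun f => f O) H) as H0; simpl in H0.
      rewrite smul_coef0 in H0. unfold s0 in H0.
      transitivity (Cdiv (Cmul (a O) (c O)) (c O)); [field; exact Hc|]. rewrite H0; field; exact Hc.
    - destruct (Nat.eq_dec m (S n)) as [->|]; [|apply IH; lia].
      pose proof (f_equal (fun f => f (S n)) H) as H0. unfold smul, s0 in H0.
      change (csum ?g (S (S n))) with (Cadd (csum g (S n)) (g (S n))) in H0.
      rewrite csum_zero, Nat.sub_diag in H0 by (intros i Hi; rewrite IH by lia; ring).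
      transitivity (Cdiv (Cadd C0 (Cmul (a (S n)) (c O))) (c O)); [field; exact Hc|].
      rewrite H0; field; exact Hc. }
  apply functional_extensionality; intros n; apply (Ha n); lia.
Qed.

Lemma X_smul_eq0 a : smul X a = s0 -> a = s0.
Proof.
  intros H; apply functional_extensionality; intros n.
  rewrite <- (X_smul_coefS a n), H; reflexivity.
Qed.

Definition divX (a : ser) : ser := fun n => a (S n).

Lemma X_smul_divX a : a O = C0 -> smul X (divX a) = a.
Proof.
  intros H; apply functional_extensionality; intros [|n];
    [rewrite X_smul_coef0; auto | apply (X_smul_coefS (divX a))].
Qed.

Definition scale (d : Cpx) (a : ser) : ser := fun n => Cmul (Cpow d n) (a n).

Lemma scale_smul d a c : scale d (smul a c) = smul (scale d a) (scale d c).
Proof.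
  apply functional_extensionality; intros n; unfold scale, smul.
  rewrite <- csum_scal_l. apply csum_ext; intros i Hi.
  replace n with (i + (n - i))%nat at 1 by lia. rewrite Cpow_add; ring.
Qed.
Lemma scale_sadd d a c : scale d (sadd a c) = sadd (scale d a) (scale d c).
Proof. apply functional_extensionality; intros n; unfold scale, sadd; ring. Qed.
Lemma scale_ssub d a c : scale d (ssub a c) = ssub (scale d a) (scale d c).
Proof. apply functional_extensionality; intros n; unfold scale, ssub; ring. Qed.
Lemma scale_cs d z : scale d (cs z) = cs z.
Proof. apply functional_extensionality; intros [|n]; unfold scale; simpl; ring. Qed.
Lemma scale_s1 d : scale d s1 = s1.
Proof. rewrite <- cs_C1; apply scale_cs. Qed.

Definition X2 : ser := smul X X.

Lemma X2_smul_coef0 a : smul X2 a O = C0.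
Proof. unfold X2; rewrite <- smul_assoc; apply X_smul_coef0. Qed.
Lemma X2_smul_coef1 a : smul X2 a 1%nat = C0.
Proof. unfold X2; rewrite <- smul_assoc, X_smul_coefS; apply X_smul_coef0. Qed.
Lemma X2_smul_coefSS a n : smul X2 a (S (S n)) = a n.
Proof. unfold X2; rewrite <- smul_assoc, !X_smul_coefS; reflexivity. Qed.

Lemma X2_coef n : X2 n = match n with 2%nat => C1 | _ => C0 end.
Proof.
  destruct n as [|[|n]]; [apply X_smul_coef0 | apply X_smul_coefS | ].
  unfold X2; rewrite X_smul_coefS. destruct n; reflexivity.
Qed.

Lemma scale_X2 d : scale d X2 = smul (cs (Cmul d d)) X2.
Proof.
  apply functional_extensionality; intros n; unfold scale.
  rewrite cs_smul_coef, X2_coef. destruct n as [|[|[|n]]]; simpl; ring.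
Qed.

Fixpoint geo2 (D : Cpx) (n : nat) : Cpx :=
  match n with O => C1 | S O => C0 | S (S m) => Cmul D (geo2 D m) end.

Lemma geo2_inv D : smul (geo2 D) (ssub s1 (smul (cs D) X2)) = s1.
Proof.
  transitivity (ssub (geo2 D) (smul (cs D) (smul X2 (geo2 D)))); [ring|].
  apply functional_extensionality; intros [|[|n]]; unfold ssub; rewrite cs_smul_coef;
    [rewrite X2_smul_coef0 | rewrite X2_smul_coef1 | rewrite X2_smul_coefSS]; simpl; ring.
Qed.

(** * The Taylor series of [sqrt (1 - x^2)] *)

Fixpoint sqrt1mX2 (n : nat) : R :=
  match n with
  | O => 1
  | S O => 0
  | S (S m) => sqrt1mX2 m * (INR m - 1) / (INR m + 2)
  end.

Definition sqrt1mX2_ser : ser := fun n => RtoC (sqrt1mX2 n).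

Definition xderiv (a : ser) : ser := fun n => Cmul (RtoC (INR n)) (a n).

Lemma xderiv_smul a c : xderiv (smul a c) = sadd (smul (xderiv a) c) (smul a (xderiv c)).
Proof.
  apply functional_extensionality; intros n; unfold xderiv, sadd, smul.
  rewrite <- csum_scal_l, <- csum_add. apply csum_ext; intros i Hi.
  replace (INR n) with (INR i + INR (n - i)) by (rewrite <- plus_INR; f_equal; lia).
  rewrite RtoC_add. ring.
Qed.

Lemma INR_SS n : INR (S (S n)) = INR n + 2.
Proof. rewrite !S_INR; ring. Qed.

(* [(1 - x^2) f' = - x f] for [f = sqrt (1 - x^2)]. *)
Lemma xderiv_sqrt1mX2 :
  xderiv sqrt1mX2_ser = smul X2 (ssub (xderiv sqrt1mX2_ser) sqrt1mX2_ser).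
Proof.
  apply functional_extensionality; intros [|[|n]];
    rewrite ?X2_smul_coef0, ?X2_smul_coef1, ?X2_smul_coefSS;
    unfold xderiv, ssub, sqrt1mX2_ser; [Cext..|].
  cbn [sqrt1mX2]; rewrite INR_SS. pose proof (pos_INR n). Cext. field. lra.
Qed.

Lemma sqrt1mX2_sq : smul sqrt1mX2_ser sqrt1mX2_ser = ssub s1 X2.
Proof.
  set (T := smul sqrt1mX2_ser sqrt1mX2_ser).
  assert (HT : xderiv T = smul X2 (ssub (xderiv T) (sadd T T))).
  { unfold T. rewrite xderiv_smul. generalize xderiv_sqrt1mX2.
    generalize (xderiv sqrt1mX2_ser) as D; intros D HD.
    transitivity (sadd (smul (smul X2 (ssub D sqrt1mX2_ser)) sqrt1mX2_ser)
                       (smul sqrt1mX2_ser (smul X2 (ssub D sqrt1mX2_ser))));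
      [rewrite <- HD; reflexivity | ring]. }
  assert (Hrec : forall n, Cmul (RtoC (INR n + 2)) (T (S (S n))) = Cmul (RtoC (INR n - 2)) (T n)).
  { intros n. pose proof (f_equal (fun f => f (S (S n))) HT) as E; cbv beta in E.
    rewrite X2_smul_coefSS in E. unfold xderiv, ssub, sadd in E. rewrite INR_SS in E.
    rewrite E. Cext. }
  assert (Hpos : forall n, RtoC (INR n + 2) <> C0).
  { intros n E; apply (f_equal Re) in E; simpl in E; pose proof (pos_INR n); lra. }
  assert (H : forall n, T n = ssub s1 X2 n /\ T (S n) = ssub s1 X2 (S n)).
  { unfold ssub; induction n as [|n [IH0 IH1]].
    - split; unfold T, smul, sqrt1mX2_ser; rewrite X2_coef; simpl; Cext.
    - split; [exact IH1|]. apply (Cmul_cancel_l _ _ _ (Hpos n)).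
      rewrite Hrec, IH0, !X2_coef. destruct n as [|[|[|n]]]; [simpl; Cext.. | cbn -[INR]; ring]. }
  apply functional_extensionality; intros n; apply H.
Qed.

Lemma sqrt1mX2_SS n : sqrt1mX2 (S (S n)) = sqrt1mX2 n * (INR n - 1) / (INR n + 2).
Proof. reflexivity. Qed.

Lemma sqrt1mX2_odd k : sqrt1mX2 (S (2 * k)) = 0.
Proof.
  induction k; [reflexivity|].
  replace (S (2 * S k)) with (S (S (S (2 * k)))) by lia.
  rewrite sqrt1mX2_SS, IHk; unfold Rdiv; ring.
Qed.

Lemma sqrt1mX2_nonpos n : (1 <= n)%nat -> sqrt1mX2 n <= 0.
Proof.
  assert (H : forall m, sqrt1mX2 (S m) <= 0 /\ sqrt1mX2 (S (S m)) <= 0).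
  { intros m; induction m as [|m [H1 H2]]; [simpl; split; lra|].
    split; [exact H2|]. rewrite sqrt1mX2_SS, S_INR.
    pose proof (pos_INR m). apply Rmult_le_reg_r with (INR m + 1 + 2); [lra|].
    field_simplify; [nra | lra]. }
  intros Hn; destruct n; [lia | apply H].
Qed.

Lemma sum_sqrt1mX2_even k :
  sum_f_R0 sqrt1mX2 (2 * k) = - (INR (2 * k) + 2) * sqrt1mX2 (S (S (2 * k))).
Proof.
  induction k; [simpl; field|].
  replace (2 * S k)%nat with (S (S (2 * k))) by lia.
  cbn [sum_f_R0]; rewrite IHk, sqrt1mX2_odd.
  rewrite (sqrt1mX2_SS (S (S (2 * k)))), INR_SS. pose proof (pos_INR (2 * k)). field. lra.
Qed.

Lemma sum_sqrt1mX2_nonneg n : 0 <= sum_f_R0 sqrt1mX2 n.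
Proof.
  destruct (Nat.Even_or_Odd n) as [[k ->] | [k ->]].
  - rewrite sum_sqrt1mX2_even.
    pose proof (sqrt1mX2_nonpos (S (S (2 * k))) ltac:(lia)). pose proof (pos_INR (2 * k)). nra.
  - replace (2 * k + 1)%nat with (S (2 * k)) by lia.
    cbn [sum_f_R0]; rewrite sqrt1mX2_odd, sum_sqrt1mX2_even.
    pose proof (sqrt1mX2_nonpos (S (S (2 * k))) ltac:(lia)). pose proof (pos_INR (2 * k)). nra.
Qed.

Lemma ex_series_abs_sqrt1mX2 : ex_series (fun n => Rabs (sqrt1mX2 n)).
Proof.
  apply ex_series_Reals_1, growing_cv.
  - intros n; cbn [sum_f_R0]; pose proof (Rabs_pos (sqrt1mX2 (S n))); lra.
  - exists 2; intros y [n ->].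
    assert (E : sum_f_R0 (fun i => Rabs (sqrt1mX2 i)) n = 2 - sum_f_R0 sqrt1mX2 n).
    { induction n; [simpl; rewrite Rabs_R1; ring|].
      cbn [sum_f_R0]; rewrite IHn, Rabs_left1 by (apply sqrt1mX2_nonpos; lia); ring. }
    rewrite E; pose proof (sum_sqrt1mX2_nonneg n); lra.
Qed.

(** * Null sequences and complex series *)

(* Equivalent to the modulus, and free of square roots. *)
Definition Cnorm1 (z : Cpx) : R := Rabs (Re z) + Rabs (Im z).

Lemma Cnorm1_nonneg z : 0 <= Cnorm1 z.
Proof. unfold Cnorm1; pose proof (Rabs_pos (Re z)); pose proof (Rabs_pos (Im z)); lra. Qed.

Lemma Cnorm1_add z w : Cnorm1 (Cadd z w) <= Cnorm1 z + Cnorm1 w.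
Proof.
  unfold Cnorm1; simpl.
  pose proof (Rabs_triang (Re z) (Re w)); pose proof (Rabs_triang (Im z) (Im w)); lra.
Qed.

Lemma Cnorm1_mul z w : Cnorm1 (Cmul z w) <= Cnorm1 z * Cnorm1 w.
Proof.
  unfold Cnorm1; simpl.
  pose proof (Rabs_triang (Re z * Re w) (- (Im z * Im w))).
  pose proof (Rabs_triang (Re z * Im w) (Im z * Re w)).
  rewrite Rabs_Ropp, !Rabs_mult in *.
  pose proof (Rabs_pos (Re z)); pose proof (Rabs_pos (Im z));
  pose proof (Rabs_pos (Re w)); pose proof (Rabs_pos (Im w)).
  unfold Rminus; nra.
Qed.

Lemma Cnorm1_RtoC a : Cnorm1 (RtoC a) = Rabs a.
Proof. unfold Cnorm1; simpl; rewrite Rabs_R0; ring. Qed.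

Lemma Cnorm1_unit z : Cnorm2 z = 1 -> Cnorm1 z <= 2.
Proof.
  unfold Cnorm1, Cnorm2; intros H.
  assert (Rabs (Re z) <= 1) by (apply Rabs_le; nra).
  assert (Rabs (Im z) <= 1) by (apply Rabs_le; nra). lra.
Qed.

Lemma Un_cv_0_le (u v : nat -> R) : (forall n, Rabs (u n) <= v n) -> Un_cv v 0 -> Un_cv u 0.
Proof.
  intros H Hv eps Heps. destruct (Hv eps Heps) as [N HN]; exists N; intros n Hn.
  specialize (HN n Hn); specialize (H n). unfold R_dist in *. rewrite Rminus_0_r in *.
  pose proof (Rabs_pos (u n)). rewrite Rabs_pos_eq in HN by lra. lra.
Qed.

Lemma Un_cv_0_scal c u : Un_cv u 0 -> Un_cv (fun n => c * u n) 0.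
Proof.
  intros Hu. replace 0 with (c * 0) by ring.
  apply CV_mult; [apply is_lim_seq_Reals, is_lim_seq_const | exact Hu].
Qed.

Definition cnull (f : nat -> Cpx) : Prop := Un_cv (fun n => Cnorm1 (f n)) 0.

Lemma cnull_ext f g : (forall n, f n = g n) -> cnull f -> cnull g.
Proof. intros H; apply Un_cv_ext; intros n; rewrite H; reflexivity. Qed.

Lemma cnull_zero : cnull (fun _ => C0).
Proof.
  eapply Un_cv_ext; [|apply is_lim_seq_Reals, is_lim_seq_const].
  intros n; unfold Cnorm1; simpl; rewrite Rabs_R0; ring.
Qed.

Lemma cnull_tail f : cnull (fun n => f (S n)) -> cnull f.
Proof.
  intros H eps Heps. destruct (H eps Heps) as [N HN]. exists (S N); intros [|n] Hn; [lia|].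
  apply HN; lia.
Qed.

Lemma cnull_S f : cnull f -> cnull (fun n => f (S n)).
Proof. intros H eps Heps. destruct (H eps Heps) as [N HN]. exists N; intros n Hn; apply HN; lia. Qed.

Lemma cnull_le f (u : nat -> R) : (forall n, Cnorm1 (f n) <= u n) -> Un_cv u 0 -> cnull f.
Proof.
  intros H; apply Un_cv_0_le; intros n.
  rewrite Rabs_pos_eq by apply Cnorm1_nonneg; apply H.
Qed.

Lemma cnull_add f g : cnull f -> cnull g -> cnull (fun n => Cadd (f n) (g n)).
Proof.
  intros Hf Hg. apply cnull_le with (fun n => Cnorm1 (f n) + Cnorm1 (g n)); [intros; apply Cnorm1_add|].
  replace 0 with (0 + 0) by ring. apply CV_plus; assumption.
Qed.

Lemma cnull_scal c f : cnull f -> cnull (fun n => Cmul c (f n)).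
Proof.
  intros Hf. apply cnull_le with (fun n => Cnorm1 c * Cnorm1 (f n)); [intros; apply Cnorm1_mul|].
  apply Un_cv_0_scal, Hf.
Qed.

Lemma Cnorm2_sub_null (a h : nat -> Cpx) B :
  (forall t, Cnorm1 (h t) <= B) -> cnull (fun t => Csub (a t) (h t)) ->
  Un_cv (fun t => Cnorm2 (a t) - Cnorm2 (h t)) 0.
Proof.
  intros Hh HD.
  apply Un_cv_0_le with (fun t => 2 * B * Cnorm1 (Csub (a t) (h t))
                                  + Cnorm1 (Csub (a t) (h t)) * Cnorm1 (Csub (a t) (h t))).
  - intros t. specialize (Hh t). unfold Cnorm1, Cnorm2 in *. simpl.
    set (p := Re (h t)) in *; set (q := Im (h t)) in *.
    set (r := Re (a t) - p); set (v := Im (a t) - q).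
    replace (Re (a t) * Re (a t) + Im (a t) * Im (a t) - (p * p + q * q))
      with (2 * (p * r + q * v) + (r * r + v * v)) by (unfold r, v; ring).
    pose proof (Rabs_pos p); pose proof (Rabs_pos q); pose proof (Rabs_pos r); pose proof (Rabs_pos v).
    assert (Rabs (p * r + q * v) <= Rabs p * Rabs r + Rabs q * Rabs v)
      by (rewrite <- !Rabs_mult; apply Rabs_triang).
    assert (r * r = Rabs r * Rabs r) by (rewrite <- Rabs_mult, Rabs_pos_eq; nra).
    assert (v * v = Rabs v * Rabs v) by (rewrite <- Rabs_mult, Rabs_pos_eq; nra).
    eapply Rle_trans; [apply Rabs_triang|]. rewrite Rabs_mult, (Rabs_pos_eq 2), (Rabs_pos_eq (r * r + v * v)) by nra.
    nra.
  - replace 0 with (0 + 0 * 0) by ring.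
    apply CV_plus; [apply Un_cv_0_scal, HD | apply CV_mult; exact HD].
Qed.

Definition is_cseries (a : nat -> Cpx) (A : Cpx) : Prop :=
  infinite_sum (fun n => Re (a n)) (Re A) /\ infinite_sum (fun n => Im (a n)) (Im A).

Lemma Re_csum f n : Re (csum f (S n)) = sum_f_R0 (fun i => Re (f i)) n.
Proof. induction n; [simpl; ring | cbn [csum sum_f_R0] in *; simpl; rewrite <- IHn; reflexivity]. Qed.
Lemma Im_csum f n : Im (csum f (S n)) = sum_f_R0 (fun i => Im (f i)) n.
Proof. induction n; [simpl; ring | cbn [csum sum_f_R0] in *; simpl; rewrite <- IHn; reflexivity]. Qed.

Lemma Un_cv_Rabs_sub u l : Un_cv u l -> Un_cv (fun n => Rabs (u n - l)) 0.
Proof.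
  intros H eps Heps. destruct (H eps Heps) as [N HN]; exists N; intros n Hn.
  unfold R_dist; rewrite Rminus_0_r, Rabs_Rabsolu; apply HN, Hn.
Qed.

Lemma is_cseries_cnull a A : is_cseries a A -> cnull (fun n => Csub (csum a (S n)) A).
Proof.
  intros [Hr Hi]. eapply Un_cv_ext; [|replace 0 with (0 + 0) by ring;
    apply (CV_plus _ _ _ _ (Un_cv_Rabs_sub _ _ Hr) (Un_cv_Rabs_sub _ _ Hi))].
  intros n; unfold Cnorm1, Csub; cbn [Re Im]; rewrite Re_csum, Im_csum; reflexivity.
Qed.

Lemma is_cseries_unique a A B : is_cseries a A -> is_cseries a B -> A = B.
Proof. intros [H1 H2] [H3 H4]; apply Cpx_ext; eapply uniqueness_sum; eassumption. Qed.

Lemma is_cseries_conj a A : is_cseries a A -> is_cseries (fun n => Cconj (a n)) (Cconj A).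
Proof.
  intros [Hr Hi]; split; [exact Hr|].
  eapply Un_cv_ext; [|apply (CV_opp _ _ Hi)]. intros n.
  unfold opp_seq; induction n; cbn [sum_f_R0 Cconj Im] in *; lra.
Qed.

Lemma ex_series_Re a : ex_series (fun n => Cnorm1 (a n)) -> ex_series (fun n => Rabs (Re (a n))).
Proof.
  apply (@ex_series_le R_AbsRing R_CompleteNormedModule); intros n.
  change (norm (Rabs (Re (a n)))) with (Rabs (Rabs (Re (a n)))).
  rewrite Rabs_Rabsolu. unfold Cnorm1; pose proof (Rabs_pos (Im (a n))); lra.
Qed.
Lemma ex_series_Im a : ex_series (fun n => Cnorm1 (a n)) -> ex_series (fun n => Rabs (Im (a n))).
Proof.
  apply (@ex_series_le R_AbsRing R_CompleteNormedModule); intros n.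
  change (norm (Rabs (Im (a n)))) with (Rabs (Rabs (Im (a n)))).
  rewrite Rabs_Rabsolu. unfold Cnorm1; pose proof (Rabs_pos (Re (a n))); lra.
Qed.

Lemma is_cseries_of_abs a : ex_series (fun n => Cnorm1 (a n)) -> exists A, is_cseries a A.
Proof.
  intros H.
  destruct (ex_series_Reals_0 _ (ex_series_Rabs _ (ex_series_Re a H))) as [x Hx].
  destruct (ex_series_Reals_0 _ (ex_series_Rabs _ (ex_series_Im a H))) as [y Hy].
  exists (mkC x y); split; assumption.
Qed.

Lemma infinite_sum_cauchy_prod (x y : nat -> R) lx ly :
  ex_series (fun n => Rabs (x n)) -> ex_series (fun n => Rabs (y n)) ->
  infinite_sum x lx -> infinite_sum y ly ->
  infinite_sum (fun n => sum_f_R0 (fun k => x k * y (n - k)%nat) n) (lx * ly).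
Proof.
  intros Ax Ay Hx Hy. apply is_series_Reals, is_series_mult; auto; apply is_series_Reals; auto.
Qed.

Lemma is_cseries_smul a c A C :
  ex_series (fun n => Cnorm1 (a n)) -> ex_series (fun n => Cnorm1 (c n)) ->
  is_cseries a A -> is_cseries c C -> is_cseries (smul a c) (Cmul A C).
Proof.
  intros Aa Ac [Ha1 Ha2] [Hc1 Hc2].
  pose proof (ex_series_Re a Aa) as Aar; pose proof (ex_series_Im a Aa) as Aai.
  pose proof (ex_series_Re c Ac) as Acr; pose proof (ex_series_Im c Ac) as Aci.
  split; [change (Re (Cmul A C)) with (Re A * Re C - Im A * Im C)
        |change (Im (Cmul A C)) with (Re A * Im C + Im A * Re C)].
  - eapply Un_cv_ext;
      [|apply (CV_minus _ _ _ _ (infinite_sum_cauchy_prod _ _ _ _ Aar Acr Ha1 Hc1)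
                               (infinite_sum_cauchy_prod _ _ _ _ Aai Aci Ha2 Hc2))].
    intros n; cbv beta; rewrite <- minus_sum. apply sum_eq; intros i _.
    unfold smul; rewrite Re_csum; rewrite <- minus_sum; reflexivity.
  - eapply Un_cv_ext;
      [|apply (CV_plus _ _ _ _ (infinite_sum_cauchy_prod _ _ _ _ Aar Aci Ha1 Hc2)
                              (infinite_sum_cauchy_prod _ _ _ _ Aai Acr Ha2 Hc1))].
    intros n; cbv beta; rewrite <- plus_sum. apply sum_eq; intros i _.
    unfold smul; rewrite Im_csum; rewrite <- plus_sum; reflexivity.
Qed.

Lemma is_cseries_finite a N : (forall n, (N <= n)%nat -> a n = C0) -> is_cseries a (csum a N).
Proof.
  intros Ha.
  assert (Hs : forall n, (N <= n)%nat -> csum a (S n) = csum a N).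
  { intros n Hn; induction Hn as [|m Hm IH].
    - change (Cadd (csum a N) (a N) = csum a N); rewrite Ha by lia; ring.
    - change (Cadd (csum a (S m)) (a (S m)) = csum a N); rewrite IH, Ha by lia; ring. }
  split; intros eps Heps; exists N; intros n Hn; unfold R_dist;
    [rewrite <- Re_csum | rewrite <- Im_csum]; rewrite Hs by lia; rewrite Rminus_diag, Rabs_R0; lra.
Qed.

Definition sqrt_ser (g : Cpx) : ser := scale g sqrt1mX2_ser.

Lemma sqrt_ser_sq g : smul (sqrt_ser g) (sqrt_ser g) = ssub s1 (smul (cs (Cmul g g)) X2).
Proof.
  unfold sqrt_ser; rewrite <- scale_smul, sqrt1mX2_sq.
  apply functional_extensionality; intros n; unfold scale, ssub.
  rewrite cs_smul_coef, X2_coef. destruct n as [|[|[|n]]]; simpl; ring.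
Qed.

Lemma sqrt_ser_conj g : sqrt_ser (Cconj g) = fun n => Cconj (sqrt_ser g n).
Proof.
  apply functional_extensionality; intros n; unfold sqrt_ser, scale, sqrt1mX2_ser.
  rewrite Cconj_mul, Cconj_pow, Cconj_RtoC; reflexivity.
Qed.

Lemma ex_series_sqrt_ser g : Cnorm2 g = 1 -> ex_series (fun n => Cnorm1 (sqrt_ser g n)).
Proof.
  intros Hg. apply (@ex_series_le R_AbsRing R_CompleteNormedModule) with (fun n => 2 * Rabs (sqrt1mX2 n)).
  - intros n. change (norm (Cnorm1 (sqrt_ser g n))) with (Rabs (Cnorm1 (sqrt_ser g n))).
    rewrite Rabs_pos_eq by apply Cnorm1_nonneg.
    unfold sqrt_ser, scale, sqrt1mX2_ser. eapply Rle_trans; [apply Cnorm1_mul|]. rewrite Cnorm1_RtoC.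
    apply Rmult_le_compat_r; [apply Rabs_pos|].
    apply Cnorm1_unit; rewrite Cnorm2_pow, Hg; apply pow1.
  - apply (ex_series_scal_l 2 _ ex_series_abs_sqrt1mX2).
Qed.

(* The sum [R] of [sqrt_ser e] satisfies [R^2 = 1 - e^2] by the Cauchy product formula, and the
   product series sums to [R conj(R) = |R|^2]. *)
Lemma is_cseries_sqrt_ser_conj e : Cnorm2 e = 1 ->
  is_cseries (smul (sqrt_ser e) (sqrt_ser (Cconj e))) (RtoC (sqrt (Cnorm2 (Csub C1 (Cmul e e))))).
Proof.
  intros He. pose proof (ex_series_sqrt_ser e He) as Ae.
  assert (Aec : ex_series (fun n => Cnorm1 (sqrt_ser (Cconj e) n)))
    by (apply ex_series_sqrt_ser; rewrite Cnorm2_conj; exact He).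
  destruct (is_cseries_of_abs _ Ae) as [R HR].
  assert (HRc : is_cseries (sqrt_ser (Cconj e)) (Cconj R))
    by (rewrite sqrt_ser_conj; apply is_cseries_conj, HR).
  assert (HRR : Cmul R R = Csub C1 (Cmul e e)).
  { eapply is_cseries_unique; [apply (is_cseries_smul _ _ _ _ Ae Ae HR HR)|].
    rewrite sqrt_ser_sq.
    replace (Csub C1 (Cmul e e)) with (csum (ssub s1 (smul (cs (Cmul e e)) X2)) 3).
    - apply is_cseries_finite; intros n Hn. unfold ssub; rewrite cs_smul_coef, X2_coef.
      destruct n as [|[|[|n]]]; [lia.. | simpl; ring].
    - unfold ssub; simpl; rewrite !cs_smul_coef, !X2_coef; simpl; ring. }
  replace (RtoC (sqrt (Cnorm2 (Csub C1 (Cmul e e))))) with (Cmul R (Cconj R)).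
  - apply (is_cseries_smul _ _ _ _ Ae Aec HR HRc).
  - rewrite <- HRR, Cnorm2_mul, sqrt_square, Cmul_conj by apply Cnorm2_nonneg. reflexivity.
Qed.

(** * Amplitudes of the walk *)

Section AmplitudeGeneratingFunctions.

Variables cRR cLR cRL cLL ph : Cpx.

Local Notation amp_ := (amp cRR cLR cRL cLL ph).

Lemma amp_eq_coef (F : nat -> bool -> ser) :
  F O true = s0 ->
  F 1%nat true = smul X (smul (cs ph) (F O false)) ->
  (forall y, F (S (S y)) true =
     smul X (sadd (smul (cs cRR) (F (S y) true)) (smul (cs cRL) (F (S y) false)))) ->
  F O false = sadd s1 (smul X (sadd (smul (cs cLR) (F 1%nat true)) (smul (cs cLL) (F 1%nat false)))) ->
  (forall y, F (S y) false =
     smul X (sadd (smul (cs cLR) (F (S (S y)) true)) (smul (cs cLL) (F (S (S y)) false)))) ->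
  forall t x s, amp_ t x s = F x s t.
Proof.
  intros H0t H1t HSt H0f HSf t. induction t as [|t IH]; intros x s.
  - destruct x as [|y], s; simpl amp.
    + rewrite H0t; reflexivity.
    + rewrite H0f; unfold sadd; rewrite X_smul_coef0; simpl; ring.
    + destruct y; [rewrite H1t | rewrite HSt]; rewrite X_smul_coef0; reflexivity.
    + rewrite HSf, X_smul_coef0; reflexivity.
  - destruct s; [destruct x as [|[|y]] |]; simpl amp.
    + rewrite H0t; reflexivity.
    + rewrite H1t, X_smul_coefS, cs_smul_coef, IH; reflexivity.
    + rewrite HSt, X_smul_coefS; unfold sadd; rewrite !cs_smul_coef, !IH; reflexivity.
    + destruct x as [|y].
      * rewrite H0f; unfold sadd at 1; rewrite X_smul_coefS; unfold sadd; rewrite !cs_smul_coef, !IH.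
        simpl; ring.
      * rewrite HSf, X_smul_coefS; unfold sadd; rewrite !cs_smul_coef, !IH; reflexivity.
Qed.

Fixpoint spow (a : ser) (n : nat) : ser :=
  match n with O => s1 | S n => smul a (spow a n) end.

(* [rho] generates the first passage from [x+1] down to [x] and [L] the amplitude
   of return to the origin. *)
Variables rho L : ser.
Hypothesis rho_fix : rho =
  sadd (smul X (cs cRR))
       (ssub (smul (smul X (cs cLL)) (smul rho rho)) (smul (smul X2 (cs (det2 cRR cLR cRL cLL))) rho)).
Hypothesis L_fix :
  smul L (ssub (ssub s1 (smul (smul X (cs cLL)) rho)) (smul (smul X2 (cs ph)) (cs cLR))) =
  ssub s1 (smul (smul X (cs cLL)) rho).

Definition amp_ser (x : nat) (s : bool) : ser :=
  match x, s with
  | O, false => L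
  | O, true => s0
  | S y, true => smul (smul X (cs ph)) (smul L (spow rho y))
  | S y, false => smul (ssub L s1) (spow rho (S y))
  end.

Lemma amp_ser_left_step :
  ssub L s1 = sadd (smul (smul X2 (cs ph)) (smul (cs cLR) L))
                   (smul (smul X (cs cLL)) (smul (ssub L s1) rho)).
Proof.
  transitivity (sadd (ssub (smul L (ssub (ssub s1 (smul (smul X (cs cLL)) rho))
                                         (smul (smul X2 (cs ph)) (cs cLR))))
                           (ssub s1 (smul (smul X (cs cLL)) rho)))
                     (sadd (smul (smul X2 (cs ph)) (smul (cs cLR) L))
                           (smul (smul X (cs cLL)) (smul (ssub L s1) rho)))); [|rewrite L_fix]; ring.
Qed.

Lemma cs_det2 : cs (det2 cRR cLR cRL cLL) = ssub (smul (cs cRR) (cs cLL)) (smul (cs cLR) (cs cRL)).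
Proof. unfold det2; rewrite cs_sub, !cs_mul; reflexivity. Qed.

Lemma amp_ser_right_step :
  smul (cs ph) (smul L rho) =
  sadd (smul (smul X (cs cRR)) (smul (cs ph) L)) (smul (cs cRL) (smul (ssub L s1) rho)).
Proof.
  set (D := ssub (ssub s1 (smul (smul X (cs cLL)) rho)) (smul (smul X2 (cs ph)) (cs cLR))).
  apply ssub_eq0, (smul_eq0 _ D).
  - transitivity (sadd (smul (ssub (ssub (smul (cs ph) rho) (smul X (smul (cs cRR) (cs ph)))) (smul (cs cRL) rho))
                             (ssub (smul L D) (ssub s1 (smul (smul X (cs cLL)) rho))))
                       (smul (cs ph) (ssub rho (sadd (smul X (cs cRR))
                          (ssub (smul (smul X (cs cLL)) (smul rho rho))
                                (smul (smul X2 (cs (det2 cRR cLR cRL cLL))) rho)))))).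
    + unfold D, X2; rewrite cs_det2; ring.
    + unfold D; rewrite (ssub_of_eq _ _ L_fix), <- rho_fix; ring.
  - unfold D, ssub; rewrite !smul_coef0, X2_coef; simpl.
    replace (Csub (Csub C1 (Cmul (Cmul C0 cLL) (rho O))) (Cmul (Cmul C0 ph) cLR)) with C1 by ring.
    exact C1_neq0.
Qed.

Theorem amp_coef t x s : amp_ t x s = amp_ser x s t.
Proof.
  apply amp_eq_coef; [reflexivity | unfold amp_ser; simpl; ring | intros y | | intros y].
  - unfold amp_ser; cbn [spow].
    transitivity (smul (smul X (spow rho y)) (smul (cs ph) (smul L rho))); [ring|].
    rewrite amp_ser_right_step; ring.
  - unfold amp_ser; cbn [spow].
    transitivity (sadd s1 (ssub L s1)); [ring | rewrite amp_ser_left_step at 1; unfold X2; ring].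
  - unfold amp_ser; cbn [spow].
    transitivity (smul (ssub L s1) (smul rho (spow rho y))); [ring|].
    rewrite amp_ser_left_step at 1; unfold X2; ring.
Qed.

End AmplitudeGeneratingFunctions.

Lemma amp_parity cRR cLR cRL cLL ph t x s :
  Nat.even (t + x) = false -> amp cRR cLR cRL cLL ph t x s = C0.
Proof.
  revert x s; induction t as [|t IH]; intros x s Hp.
  - destruct x, s; [reflexivity | discriminate | reflexivity..].
  - destruct s; [destruct x as [|[|y]] |]; simpl amp; [reflexivity | | |].
    + replace (S t + 1)%nat with (S (S (t + 0))) in Hp by lia.
      rewrite IH by exact Hp; ring.
    + replace (S t + S (S y))%nat with (S (S (t + S y))) in Hp by lia.
      rewrite !IH by exact Hp; ring.
    + replace (S t + x)%nat with (t + S x)%nat in Hp by lia.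
      rewrite !IH by exact Hp; ring.
Qed.

Definition ev (n : nat) : R := if Nat.even n then 1 else 0.

Lemma ev_SS n : ev (S (S n)) = ev n.
Proof. reflexivity. Qed.

(* A solution of the walk recursion whose amplitude at [|0,L>] tends to 0 tends to 0
   everywhere: the recursion for the [L]-component can be solved backwards since [cLL <> 0]. *)
Lemma walk_null cRR cLR cRL cLL ph (D : nat -> nat -> bool -> Cpx) :
  cLL <> C0 ->
  (forall t, D t O true = C0) ->
  (forall t, D (S t) 1%nat true = Cmul ph (D t O false)) ->
  (forall t y, D (S t) (S (S y)) true = Cadd (Cmul cRR (D t (S y) true)) (Cmul cRL (D t (S y) false))) ->
  (forall t x, D (S t) x false = Cadd (Cmul cLR (D t (S x) true)) (Cmul cLL (D t (S x) false))) ->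
  cnull (fun t => D t O false) ->
  forall x s, cnull (fun t => D t x s).
Proof.
  intros HLL H0 H1 HR HL Hret.
  assert (Hx : forall x, cnull (fun t => D t x true) /\ cnull (fun t => D t x false)).
  { induction x as [|x [IHt IHf]].
    - split; [apply (cnull_ext (fun _ => C0)); [intros; symmetry; apply H0 | apply cnull_zero] | exact Hret].
    - assert (Ht : cnull (fun t => D t (S x) true)).
      { apply cnull_tail. destruct x as [|y].
        - apply (cnull_ext (fun t => Cmul ph (D t O false))); [intros; symmetry; apply H1|].
          apply cnull_scal, IHf.
        - apply (cnull_ext (fun t => Cadd (Cmul cRR (D t (S y) true)) (Cmul cRL (D t (S y) false))));
            [intros; symmetry; apply HR | apply cnull_add; apply cnull_scal; assumption]. }
      split; [exact Ht|].
      apply (cnull_ext (fun t => Cmul (Cinv cLL) (Cadd (D (S t) x false) (Copp (Cmul cLR (D t (S x) true)))))).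
      + intros t; rewrite HL; field; exact HLL.
      + apply cnull_scal, cnull_add; [exact (cnull_S (fun t => D t x false) IHf)|].
        apply (cnull_ext (fun t => Cmul (Copp cLR) (D t (S x) true))); [intros; ring | apply cnull_scal, Ht]. }
  intros x [|]; apply Hx.
Qed.

Definition walk_prob cRR cLR cRL cLL ph (t x : nat) : R :=
  match x with
  | O => Cnorm2 (amp cRR cLR cRL cLL ph t O false)
  | _ => Cnorm2 (amp cRR cLR cRL cLL ph t x true) + Cnorm2 (amp cRR cLR cRL cLL ph t x false)
  end.

(** * Explicit solution for the coins of the theorem *)

Lemma Csqrt_unit z : Cnorm2 z = 1 -> exists d, Cmul d d = z /\ Cnorm2 d = 1.
Proof.
  destruct z as [a c]; unfold Cnorm2; simpl; intros H.
  set (p := sqrt ((1 + a) / 2)); set (q := sqrt ((1 - a) / 2)).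
  assert (Hp : p * p = (1 + a) / 2) by (apply sqrt_sqrt; nra).
  assert (Hq : q * q = (1 - a) / 2) by (apply sqrt_sqrt; nra).
  assert (Hp0 : 0 <= p) by apply sqrt_pos. assert (Hq0 : 0 <= q) by apply sqrt_pos.
  assert (Hpq : (2 * p * q) * (2 * p * q) = c * c) by nra.
  assert (Hpq0 : 0 <= 2 * p * q) by nra.
  destruct (Rle_dec 0 c).
  - exists (mkC p q); split; [apply Cpx_ext; simpl; nra | unfold Cnorm2; simpl; lra].
  - exists (mkC p (- q)); split; [apply Cpx_ext; simpl; nra | unfold Cnorm2; simpl; lra].
Qed.

Record coin_normal_form (cRR cLR cRL cLL d : Cpx) (b : R) : Prop := {
  nf_d : Cnorm2 d = 1;
  nf_LR : cLR = Cmul (RtoC b) (Cmul d d);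
  nf_RL : cRL = RtoC (- b);
  nf_det : det2 cRR cLR cRL cLL = Cmul d d;
  nf_RR : Cnorm2 cRR = 1 - b * b;
  nf_LL : Cnorm2 cLL = 1 - b * b }.

Lemma coin_normal_form_of_unitary cRR cLR cRL cLL b :
  unitary2 cRR cLR cRL cLL -> Cmul (Cconj cLR) (det2 cRR cLR cRL cLL) = RtoC b ->
  exists d, coin_normal_form cRR cLR cRL cLL d b.
Proof.
  intros [E1 [E2 [E3 E4]]] Hc. set (D := det2 cRR cLR cRL cLL) in *.
  (* [|det U|^2] is the Gram determinant of the rows of [U]. *)
  assert (HD : Cmul D (Cconj D) = C1).
  { transitivity (Csub (Cmul (Cadd (Cmul cRR (Cconj cRR)) (Cmul cLR (Cconj cLR)))
                             (Cadd (Cmul cRL (Cconj cRL)) (Cmul cLL (Cconj cLL))))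
                       (Cmul (Cadd (Cmul cRR (Cconj cRL)) (Cmul cLR (Cconj cLL)))
                             (Cadd (Cmul cRL (Cconj cRR)) (Cmul cLL (Cconj cLR))))).
    - unfold D, det2; rewrite Cconj_sub, !Cconj_mul; ring.
    - rewrite E1, E2, E3, E4; ring. }
  assert (HDn : Cnorm2 D = 1) by (rewrite Cmul_conj in HD; exact (f_equal Re HD)).
  destruct (Csqrt_unit D HDn) as [d [Hdd Hdn]]. exists d.
  (* Orthogonality of the rows gives [cRL = - det U conj(cLR)]. *)
  assert (HRL : cRL = RtoC (- b)).
  { transitivity (Csub (Csub (Cmul cRR (Cadd (Cmul cRL (Cconj cRR)) (Cmul cLL (Cconj cLR))))
                             (Cmul cRL (Csub (Cadd (Cmul cRR (Cconj cRR)) (Cmul cLR (Cconj cLR))) C1)))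
                       (Cmul (Cconj cLR) D)).
    - unfold D, det2; ring.
    - rewrite E3, E1, Hc; Cext. }
  assert (HLR : cLR = Cmul (RtoC b) D).
  { rewrite <- Cconj_RtoC, <- Hc, Cconj_mul, Cconj_involutive.
    transitivity (Cmul cLR (Cmul D (Cconj D))); [rewrite HD | ]; ring. }
  assert (Hn : forall z w, Cadd (Cmul z (Cconj z)) (Cmul w (Cconj w)) = C1 ->
                           Cnorm2 w = b * b -> Cnorm2 z = 1 - b * b).
  { intros z w Hzw Hw. rewrite !Cmul_conj in Hzw. apply (f_equal Re) in Hzw; simpl in Hzw; lra. }
  constructor; [exact Hdn | rewrite Hdd; exact HLR | exact HRL | exact (eq_sym Hdd) | |].
  - apply (Hn _ cLR E1). rewrite HLR, Cnorm2_mul, Cnorm2_RtoC, HDn; ring.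
  - apply (Hn _ cRL). + rewrite <- E4; ring. + rewrite HRL, Cnorm2_RtoC; ring.
Qed.

Section ExplicitSolution.

Variables cRR cLR cRL cLL ph d : Cpx.
Variable b : R.
Hypothesis Hnf : coin_normal_form cRR cLR cRL cLL d b.
Hypothesis Hb : -1 < b < 0.
Hypothesis Hph : ph = RtoC 1 \/ ph = RtoC (-1).

Lemma ph_sq : Cmul ph ph = C1.
Proof. destruct Hph as [-> | ->]; Cext. Qed.

Lemma ph_add_b_neq0 : Cadd ph (RtoC b) <> C0.
Proof. intros E; apply (f_equal Re) in E; destruct Hph as [-> | ->]; simpl in E; lra. Qed.

Lemma cLL_neq0 : cLL <> C0.
Proof. apply Cneq0_of_norm2; rewrite (nf_LL _ _ _ _ _ _ Hnf); nra. Qed.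

Lemma cRR_neq0 : cRR <> C0.
Proof. apply Cneq0_of_norm2; rewrite (nf_RR _ _ _ _ _ _ Hnf); nra. Qed.

(* The discriminant of the fixed-point equation of [rho] factors as
   [(1 - eps^2 d^2 x^2) (1 - conj(eps)^2 d^2 x^2)]. *)
Definition eps : Cpx := mkC (sqrt (1 - b * b)) (- b).

Lemma sqrt_1mb2_sq : sqrt (1 - b * b) * sqrt (1 - b * b) = 1 - b * b.
Proof. apply sqrt_sqrt; nra. Qed.

Lemma eps_unit : Cnorm2 eps = 1.
Proof. unfold Cnorm2, eps; simpl; rewrite sqrt_1mb2_sq; ring. Qed.

Definition sqrt_disc0 : ser := smul (sqrt_ser eps) (sqrt_ser (Cconj eps)).

Lemma is_cseries_sqrt_disc0 : is_cseries sqrt_disc0 (RtoC (- 2 * b)).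
Proof.
  unfold sqrt_disc0. replace (- 2 * b) with (sqrt (Cnorm2 (Csub C1 (Cmul eps eps)))).
  - apply is_cseries_sqrt_ser_conj, eps_unit.
  - replace (Cnorm2 (Csub C1 (Cmul eps eps))) with ((- 2 * b) * (- 2 * b)).
    + apply sqrt_square; lra.
    + unfold Cnorm2, eps; simpl. pose proof sqrt_1mb2_sq. nra.
Qed.

Lemma sqrt_disc0_coef0 : sqrt_disc0 O = C1.
Proof. unfold sqrt_disc0, sqrt_ser, scale; rewrite smul_coef0; simpl; Cext. Qed.

Definition d2X2 : ser := smul (cs (Cmul d d)) X2.
Definition sqrt_disc : ser := scale d sqrt_disc0.

Lemma sqrt_disc_sq : smul sqrt_disc sqrt_disc =
  sadd (smul (ssub s1 d2X2) (ssub s1 d2X2)) (smul (smul (smul two two) (smul (cs (RtoC b)) (cs (RtoC b)))) d2X2).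
Proof.
  set (p := Cmul eps eps); set (q := Cmul (Cconj eps) (Cconj eps)).
  assert (Hpq : Cadd p q = RtoC (2 - 4 * b * b)).
  { unfold p, q, eps; pose proof sqrt_1mb2_sq; Cext. nra. }
  assert (Hpq1 : Cmul p q = C1).
  { transitivity (Cmul (Cmul eps (Cconj eps)) (Cmul eps (Cconj eps))); [unfold p, q; ring|].
    rewrite Cmul_conj, eps_unit; Cext. }
  unfold sqrt_disc. rewrite <- scale_smul.
  transitivity (scale d (sadd (ssub s1 (smul (cs (Cadd p q)) X2)) (smul (cs (Cmul p q)) (smul X2 X2)))).
  { f_equal. unfold sqrt_disc0. rewrite cs_add, cs_mul.
    transitivity (smul (smul (sqrt_ser eps) (sqrt_ser eps)) (smul (sqrt_ser (Cconj eps)) (sqrt_ser (Cconj eps))));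
      [ring | rewrite !sqrt_ser_sq; fold p q; ring]. }
  rewrite Hpq, Hpq1, cs_C1, scale_sadd, scale_ssub, !scale_smul, !scale_cs, scale_X2.
  replace (RtoC (2 - 4 * b * b)) with (Csub (RtoC 2) (Cmul (Cmul (RtoC 2) (RtoC 2)) (Cmul (RtoC b) (RtoC b))))
    by Cext.
  rewrite cs_sub, !cs_mul, cs_RtoC2, scale_s1.
  unfold d2X2; rewrite cs_mul; ring.
Qed.

Lemma sqrt_disc_coef0 : sqrt_disc O = C1.
Proof. unfold sqrt_disc, scale; rewrite sqrt_disc0_coef0; simpl; ring. Qed.

Lemma d2X2_coef0 : d2X2 O = C0.
Proof. unfold d2X2; rewrite cs_smul_coef, X2_coef; ring. Qed.

Definition rho : ser := smul (cs (Cinv (Cmul (RtoC 2) cLL))) (divX (ssub (sadd s1 d2X2) sqrt_disc)).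

Lemma two_cLL_X_rho : smul (smul two (cs cLL)) (smul X rho) = ssub (sadd s1 d2X2) sqrt_disc.
Proof.
  unfold rho. rewrite <- cs_RtoC2, <- cs_mul.
  transitivity (smul (smul (cs (Cmul (RtoC 2) cLL)) (cs (Cinv (Cmul (RtoC 2) cLL))))
                     (smul X (divX (ssub (sadd s1 d2X2) sqrt_disc)))); [ring|].
  rewrite <- cs_mul, X_smul_divX.
  - replace (Cmul (Cmul (RtoC 2) cLL) (Cinv (Cmul (RtoC 2) cLL))) with C1.
    + rewrite cs_C1; ring.
    + field. split; [exact cLL_neq0 | intros E; apply (f_equal Re) in E; simpl in E; lra].
  - unfold ssub, sadd; rewrite d2X2_coef0, sqrt_disc_coef0; simpl; ring.
Qed.

Lemma cRR_cLL : Cmul cRR cLL = Cmul (Cmul d d) (Csub C1 (Cmul (RtoC b) (RtoC b))).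
Proof.
  pose proof (nf_det _ _ _ _ _ _ Hnf) as Hdet. unfold det2 in Hdet.
  rewrite (nf_LR _ _ _ _ _ _ Hnf), (nf_RL _ _ _ _ _ _ Hnf) in Hdet.
  transitivity (Cadd (Csub (Cmul cRR cLL) (Cmul (Cmul (RtoC b) (Cmul d d)) (RtoC (- b))))
                     (Cmul (Cmul (RtoC b) (Cmul d d)) (RtoC (- b)))); [ring|].
  rewrite Hdet; Cext.
Qed.

Lemma cs_cRR_cLL : smul (cs cRR) (cs cLL) = smul (cs (Cmul d d)) (ssub s1 (smul (cs (RtoC b)) (cs (RtoC b)))).
Proof.
  rewrite <- cs_mul, cRR_cLL, (cs_mul (Cmul d d)), cs_sub, cs_C1, (cs_mul (RtoC b)); reflexivity.
Qed.

Lemma rho_fix : rho =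
  sadd (smul X (cs cRR))
       (ssub (smul (smul X (cs cLL)) (smul rho rho)) (smul (smul X2 (cs (det2 cRR cLR cRL cLL))) rho)).
Proof.
  rewrite (nf_det _ _ _ _ _ _ Hnf).
  apply ssub_eq0, X_smul_eq0, (smul_eq0 _ (smul two (smul two (cs cLL)))).
  2:{ rewrite !smul_coef0. apply Cmul_neq0; [exact C2_neq0|].
      apply Cmul_neq0; [exact C2_neq0 | exact cLL_neq0]. }
  set (r := ssub (smul (smul two (cs cLL)) (smul X rho)) (ssub (sadd s1 d2X2) sqrt_disc)).
  set (Q := ssub (smul sqrt_disc sqrt_disc) (sadd (smul (ssub s1 d2X2) (ssub s1 d2X2))
                 (smul (smul (smul two two) (smul (cs (RtoC b)) (cs (RtoC b)))) d2X2))).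
  set (C := ssub (smul (cs cRR) (cs cLL))
                 (smul (cs (Cmul d d)) (ssub s1 (smul (cs (RtoC b)) (cs (RtoC b)))))).
  transitivity (sadd (sopp Q) (sadd (sopp (smul (smul two two) (smul X2 C))) (smul r (ssub (smul two sqrt_disc) r)))).
  - unfold r, Q, C, d2X2, X2; ring.
  - unfold r, Q, C; rewrite two_cLL_X_rho, sqrt_disc_sq, cs_cRR_cLL; ring.
Qed.

Definition two_ph_b : Cpx := Cmul (RtoC 2) (Cadd ph (RtoC b)).

Lemma two_ph_b_neq0 : two_ph_b <> C0.
Proof.
  apply Cmul_neq0; [|exact ph_add_b_neq0].
  intros E; apply (f_equal Re) in E; simpl in E; lra.
Qed.

Lemma cs_two_ph_b : cs two_ph_b = smul two (sadd (cs ph) (cs (RtoC b))).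
Proof. unfold two_ph_b; rewrite cs_mul, cs_add, cs_RtoC2; reflexivity. Qed.

Definition L_num : ser :=
  sadd (smul two (cs (RtoC b))) (smul (cs ph) (sadd (ssub s1 d2X2) sqrt_disc)).

Definition L : ser := smul (cs (Cinv two_ph_b)) (smul L_num (geo2 (Cmul d d))).

Lemma L_rec : smul (smul (cs two_ph_b) L) (ssub s1 d2X2) = L_num.
Proof.
  unfold L, d2X2.
  transitivity (smul (smul (cs two_ph_b) (cs (Cinv two_ph_b))) (smul L_num (smul (geo2 (Cmul d d))
                  (ssub s1 (smul (cs (Cmul d d)) X2))))); [ring|].
  rewrite geo2_inv, <- cs_mul.
  replace (Cmul two_ph_b (Cinv two_ph_b)) with C1 by (field; exact two_ph_b_neq0).
  rewrite cs_C1; ring.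
Qed.

(* [L_fix] reduces to this identity, with [w = 1 - d2X2 + sqrt_disc = 2 - 2 x cLL rho]. *)
Lemma L_num_identity :
  smul L_num (ssub (sadd (ssub s1 d2X2) sqrt_disc) (smul (smul two (smul (cs ph) (cs (RtoC b)))) d2X2)) =
  smul (smul (cs two_ph_b) (ssub s1 d2X2)) (sadd (ssub s1 d2X2) sqrt_disc).
Proof.
  pose proof ph_sq as Hp. apply (f_equal cs) in Hp. rewrite cs_mul, cs_C1 in Hp.
  apply ssub_eq0.
  transitivity (sadd (smul (cs ph) (ssub (smul sqrt_disc sqrt_disc) (sadd (smul (ssub s1 d2X2) (ssub s1 d2X2))
                        (smul (smul (smul two two) (smul (cs (RtoC b)) (cs (RtoC b)))) d2X2))))
                     (smul (smul (smul two (cs (RtoC b))) (smul d2X2 (sadd (ssub s1 d2X2) sqrt_disc)))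
                           (ssub s1 (smul (cs ph) (cs ph))))).
  - unfold L_num; rewrite cs_two_ph_b; ring.
  - rewrite sqrt_disc_sq, Hp; ring.
Qed.

Lemma L_fix :
  smul L (ssub (ssub s1 (smul (smul X (cs cLL)) rho)) (smul (smul X2 (cs ph)) (cs cLR))) =
  ssub s1 (smul (smul X (cs cLL)) rho).
Proof.
  apply ssub_eq0, (smul_eq0 _ (smul two (smul (cs two_ph_b) (ssub s1 d2X2)))).
  2:{ unfold ssub; rewrite !smul_coef0, d2X2_coef0. apply Cmul_neq0; [exact C2_neq0|].
      apply Cmul_neq0; [exact two_ph_b_neq0 | simpl; replace (Csub C1 C0) with C1 by ring; exact C1_neq0]. }
  assert (HLR : smul X2 (cs cLR) = smul (cs (RtoC b)) d2X2).
  { unfold d2X2; rewrite (nf_LR _ _ _ _ _ _ Hnf), cs_mul; ring. }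
  transitivity (ssub (smul (smul (smul (cs two_ph_b) L) (ssub s1 d2X2))
                     (ssub two (sadd (smul (smul two (cs cLL)) (smul X rho))
                                     (smul (smul two (cs ph)) (smul X2 (cs cLR))))))
                     (smul (smul (cs two_ph_b) (ssub s1 d2X2)) (ssub two (smul (smul two (cs cLL)) (smul X rho))))).
  { ring. }
  rewrite L_rec, two_cLL_X_rho, HLR.
  transitivity (ssub (smul L_num (ssub (sadd (ssub s1 d2X2) sqrt_disc) (smul (smul two (smul (cs ph) (cs (RtoC b)))) d2X2)))
                     (smul (smul (cs two_ph_b) (ssub s1 d2X2)) (sadd (ssub s1 d2X2) sqrt_disc))); [ring|].
  rewrite L_num_identity; ring.
Qed.

Definition L_num0 : ser :=
  sadd (smul two (cs (RtoC b))) (smul (cs ph) (sadd (ssub s1 X2) sqrt_disc0)).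

Lemma L_num_scale : L_num = scale d L_num0.
Proof.
  unfold L_num, L_num0, d2X2, sqrt_disc.
  rewrite !scale_sadd, !scale_smul, !scale_sadd, !scale_ssub, !scale_cs, scale_X2, scale_s1. reflexivity.
Qed.

Lemma L_num0_coef n :
  L_num0 n = Cadd (Cmul (RtoC (2 * b)) (s1 n)) (Cmul ph (Cadd (Csub (s1 n) (X2 n)) (sqrt_disc0 n))).
Proof.
  unfold L_num0, sadd, ssub. rewrite cs_smul_coef, smul_comm, cs_smul_coef.
  unfold sadd; destruct n; simpl; Cext.
Qed.

Lemma csum_s1 n : csum s1 (S n) = C1.
Proof. induction n; [simpl; ring | change (Cadd (csum s1 (S n)) C0 = C1); rewrite IHn; ring]. Qed.

Lemma csum_X2 n : csum X2 (S (S (S n))) = C1.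
Proof.
  induction n; [simpl; rewrite !X2_coef; ring|].
  change (Cadd (csum X2 (S (S (S n)))) (X2 (S (S (S n)))) = C1). rewrite IHn, X2_coef; ring.
Qed.

Lemma csum_L_num0 n :
  csum L_num0 (S (S (S n))) = Cadd (RtoC (2 * b)) (Cmul ph (csum sqrt_disc0 (S (S (S n))))).
Proof.
  rewrite (csum_ext _ _ _ (fun i _ => L_num0_coef i)), csum_add, csum_scal_l, csum_scal_l, csum_add, csum_sub.
  rewrite csum_s1, csum_X2; ring.
Qed.

Definition L_dephased (n : nat) : Cpx := Cmul (Cpow (Cconj d) n) (L n).

Lemma conj_d_d : Cmul (Cconj d) d = C1.
Proof. rewrite Cring_theory.(Rmul_comm), Cmul_conj, (nf_d _ _ _ _ _ _ Hnf); reflexivity. Qed.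

Lemma two_ph_b_L_coef n :
  Cmul two_ph_b (L n) = Cadd (L_num n) (match n with S (S m) => Cmul two_ph_b (Cmul (Cmul d d) (L m)) | _ => C0 end).
Proof.
  rewrite <- L_rec. unfold d2X2.
  replace (smul (smul (cs two_ph_b) L) (ssub s1 (smul (cs (Cmul d d)) X2)))
    with (ssub (smul (cs two_ph_b) L) (smul (cs (Cmul d d)) (smul X2 (smul (cs two_ph_b) L)))) by ring.
  unfold ssub; rewrite !cs_smul_coef.
  destruct n as [|[|m]]; [rewrite X2_smul_coef0 | rewrite X2_smul_coef1 | rewrite X2_smul_coefSS, cs_smul_coef];
    ring.
Qed.

(* Telescoping of [two_ph_b (L_dephased (n + 2) - L_dephased n) = L_num0 (n + 2)]. *)
Lemma L_dephased_pair_sum n : Cmul two_ph_b (Cadd (L_dephased (S n)) (L_dephased n)) = csum L_num0 (S (S n)).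
Proof.
  pose proof conj_d_d as Hdd.
  induction n as [|n IH].
  - unfold L_dephased; simpl csum.
    transitivity (Cadd (Cmul (Cconj d) (Cmul two_ph_b (L 1%nat))) (Cmul two_ph_b (L O))); [simpl; ring|].
    rewrite !two_ph_b_L_coef, L_num_scale; unfold scale; simpl Cpow.
    transitivity (Cadd (Cmul (Cmul (Cconj d) d) (L_num0 1%nat)) (L_num0 O)); [ring | rewrite Hdd; ring].
  - change (csum L_num0 (S (S (S n)))) with (Cadd (csum L_num0 (S (S n))) (L_num0 (S (S n)))).
    rewrite <- IH.
    transitivity (Cadd (Cmul two_ph_b (Cadd (L_dephased (S n)) (L_dephased n)))
                       (Csub (Cmul (Cpow (Cconj d) (S (S n))) (Cmul two_ph_b (L (S (S n)))))
                             (Cmul two_ph_b (L_dephased n)))); [unfold L_dephased; ring|].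
    rewrite two_ph_b_L_coef, L_num_scale; unfold scale, L_dephased.
    transitivity (Cadd (Cmul two_ph_b (Cadd (L_dephased (S n)) (L_dephased n)))
      (Cadd (Cmul (Cmul (Cpow (Cconj d) (S (S n))) (Cpow d (S (S n)))) (L_num0 (S (S n))))
            (Cmul (Cmul two_ph_b (Cmul (Cpow (Cconj d) n) (L n)))
                  (Csub (Cmul (Cmul (Cconj d) d) (Cmul (Cconj d) d)) C1)))); [unfold L_dephased; simpl Cpow; ring|].
    rewrite (Cpow_conj_unit d (S (S n)) (nf_d _ _ _ _ _ _ Hnf)), Hdd; unfold L_dephased; ring.
Qed.

Definition ell : Cpx := Cdiv (Cmul (RtoC (2 * b)) (Csub C1 ph)) two_ph_b.

Lemma L_dephased_pair_limit : cnull (fun n => Csub (Cadd (L_dephased (S n)) (L_dephased n)) ell).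
Proof.
  apply cnull_tail.
  pose proof (cnull_S _ (cnull_S _ (is_cseries_cnull _ _ is_cseries_sqrt_disc0))) as H.
  eapply cnull_ext; [|apply (cnull_scal (Cdiv ph two_ph_b) _ H)].
  intros n; cbv beta; symmetry. apply (Cmul_cancel_l two_ph_b); [exact two_ph_b_neq0|].
  transitivity (Csub (Cmul two_ph_b (Cadd (L_dephased (S (S n))) (L_dephased (S n)))) (Cmul two_ph_b ell)); [ring|].
  rewrite L_dephased_pair_sum, csum_L_num0. replace (RtoC (-2 * b)) with (Copp (RtoC (2 * b))) by Cext.
  unfold ell. field. exact two_ph_b_neq0.
Qed.

Lemma amp_return t : amp cRR cLR cRL cLL ph t O false = L t.
Proof. exact (amp_coef cRR cLR cRL cLL ph rho L rho_fix L_fix t O false). Qed.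

Lemma L_dephased_odd n : Nat.even n = false -> L_dephased n = C0.
Proof.
  intros Hn. unfold L_dephased. rewrite <- amp_return.
  rewrite amp_parity by (rewrite Nat.add_0_r; exact Hn). ring.
Qed.

(* [L_dephased] vanishes at odd indices, so [L_dephased (n + 1) + L_dephased n] isolates the
   even one. *)
Theorem return_amp_limit :
  cnull (fun t => Csub (amp cRR cLR cRL cLL ph t O false) (Cmul ell (Cmul (Cpow d t) (RtoC (ev t))))).
Proof.
  apply cnull_tail, (cnull_le _ (fun n => 2 * Cnorm1 (Csub (Cadd (L_dephased (S n)) (L_dephased n)) ell)));
    [|apply Un_cv_0_scal, L_dephased_pair_limit].
  intros n. rewrite amp_return.
  replace (Csub (L (S n)) (Cmul ell (Cmul (Cpow d (S n)) (RtoC (ev (S n))))))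
    with (Cmul (Cpow d (S n)) (Csub (L_dephased (S n)) (Cmul ell (RtoC (ev (S n)))))).
  2:{ unfold L_dephased.
      transitivity (Csub (Cmul (Cmul (Cpow (Cconj d) (S n)) (Cpow d (S n))) (L (S n)))
                         (Cmul ell (Cmul (Cpow d (S n)) (RtoC (ev (S n)))))); [ring|].
      rewrite (Cpow_conj_unit d (S n) (nf_d _ _ _ _ _ _ Hnf)); ring. }
  eapply Rle_trans; [apply Cnorm1_mul|].
  apply Rmult_le_compat; [apply Cnorm1_nonneg | apply Cnorm1_nonneg | |].
  - apply Cnorm1_unit. rewrite Cnorm2_pow, (nf_d _ _ _ _ _ _ Hnf); apply pow1.
  - unfold ev. destruct (Nat.even (S n)) eqn:E.
    + rewrite (L_dephased_odd n) by (rewrite Nat.even_succ, <- Nat.negb_even in E; destruct (Nat.even n); easy).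
      replace (Cadd (L_dephased (S n)) C0) with (L_dephased (S n)) by ring.
      replace (Cmul ell (RtoC 1)) with ell by Cext. lra.
    + rewrite (L_dephased_odd (S n) E). replace (Csub C0 (Cmul ell (RtoC 0))) with C0 by Cext.
      unfold Cnorm1 at 1; simpl; rewrite Rabs_R0, Rplus_0_l; apply Cnorm1_nonneg.
Qed.

(* The bound state [ell d^t rcoef^x] of the walk, on the sites of the parity of [t]. *)
Definition Acoef : Cpx := Cdiv (Cadd ph (RtoC b)) cRR.
Definition rcoef : Cpx := Cdiv ph (Cmul d Acoef).

Definition lim_coef (x : nat) (s : bool) : Cpx :=
  let h := Cmul ell (Cpow rcoef x) in
  if s then match x with O => C0 | _ => Cmul Acoef h end else h.

Definition lim_amp (t x : nat) (s : bool) : Cpx :=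
  Cmul (lim_coef x s) (Cmul (Cpow d t) (RtoC (ev (t + x)))).

Lemma Acoef_neq0 : Acoef <> C0.
Proof.
  intros E. apply ph_add_b_neq0. transitivity (Cmul cRR Acoef); [|rewrite E; ring].
  unfold Acoef; field; exact cRR_neq0.
Qed.

Lemma d_neq0 : d <> C0.
Proof. apply Cneq0_of_norm2; rewrite (nf_d _ _ _ _ _ _ Hnf); lra. Qed.

Lemma d_rcoef_Acoef : Cmul d (Cmul rcoef Acoef) = ph.
Proof. unfold rcoef; field; split; [exact Acoef_neq0 | exact d_neq0]. Qed.

Lemma RR_Acoef_RL : Cadd (Cmul cRR Acoef) cRL = ph.
Proof. unfold Acoef; rewrite (nf_RL _ _ _ _ _ _ Hnf). field_simplify; [Cext | exact cRR_neq0]. Qed.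

Lemma rcoef_LR_Acoef_LL : Cmul rcoef (Cadd (Cmul cLR Acoef) cLL) = d.
Proof.
  pose proof ph_add_b_neq0. pose proof cRR_neq0. pose proof d_neq0.
  transitivity (Cdiv (Cmul ph (Cadd (Cmul cLR (Cadd ph (RtoC b))) (Cmul cRR cLL)))
                     (Cmul d (Cadd ph (RtoC b)))).
  { unfold rcoef, Acoef; field; auto. }
  rewrite cRR_cLL, (nf_LR _ _ _ _ _ _ Hnf).
  transitivity (Cdiv (Cadd (Cmul (Cmul d d) (Cadd ph (RtoC b)))
                           (Cmul (Cmul (Cmul d d) (RtoC b)) (Csub (Cmul ph ph) C1)))
                     (Cmul d (Cadd ph (RtoC b)))); [unfold Cdiv; ring|].
  rewrite ph_sq; field; auto.
Qed.

Lemma lim_amp_R1 t : lim_amp (S t) 1 true = Cmul ph (lim_amp t O false).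
Proof.
  unfold lim_amp, lim_coef. replace (S t + 1)%nat with (S (S (t + 0))) by lia.
  rewrite ev_SS, <- d_rcoef_Acoef. simpl; ring.
Qed.

Lemma lim_amp_R t y : lim_amp (S t) (S (S y)) true =
  Cadd (Cmul cRR (lim_amp t (S y) true)) (Cmul cRL (lim_amp t (S y) false)).
Proof.
  unfold lim_amp. replace (S t + S (S y))%nat with (S (S (t + S y))) by lia.
  rewrite ev_SS. transitivity (Cmul (Cmul d (Cmul rcoef Acoef)) (lim_amp t (S y) false)).
  - unfold lim_amp, lim_coef; simpl; ring.
  - rewrite d_rcoef_Acoef, <- RR_Acoef_RL. unfold lim_amp, lim_coef; ring.
Qed.

Lemma lim_amp_L t x : lim_amp (S t) x false =
  Cadd (Cmul cLR (lim_amp t (S x) true)) (Cmul cLL (lim_amp t (S x) false)).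
Proof.
  unfold lim_amp, lim_coef. replace (S t + x)%nat with (t + S x)%nat by lia.
  cbn [Cpow]. rewrite <- rcoef_LR_Acoef_LL at 1. ring.
Qed.

Theorem amp_limit x s : cnull (fun t => Csub (amp cRR cLR cRL cLL ph t x s) (lim_amp t x s)).
Proof.
  apply (walk_null cRR cLR cRL cLL ph (fun t x s => Csub (amp cRR cLR cRL cLL ph t x s) (lim_amp t x s)));
    [exact cLL_neq0 | intros [|t]; cbn [amp]; unfold lim_amp, lim_coef; ring | intros t | intros t y | intros t x' | ];
    cbn [amp]; rewrite ?lim_amp_R1, ?lim_amp_R, ?lim_amp_L; [ring.. |].
  eapply cnull_ext; [|exact return_amp_limit].
  intros t; unfold lim_amp, lim_coef; rewrite Nat.add_0_r; simpl; ring.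
Qed.

Lemma lim_amp_bound t x s : Cnorm1 (lim_amp t x s) <= 2 * Cnorm1 (lim_coef x s).
Proof.
  unfold lim_amp. eapply Rle_trans; [apply Cnorm1_mul|].
  rewrite Rmult_comm. apply Rmult_le_compat_r; [apply Cnorm1_nonneg|].
  eapply Rle_trans; [apply Cnorm1_mul|]. rewrite Cnorm1_RtoC.
  assert (Rabs (ev (t + x)) <= 1) by (unfold ev; destruct (Nat.even (t + x)); rewrite ?Rabs_R1, ?Rabs_R0; lra).
  assert (Cnorm1 (Cpow d t) <= 2) by (apply Cnorm1_unit; rewrite Cnorm2_pow, (nf_d _ _ _ _ _ _ Hnf); apply pow1).
  pose proof (Cnorm1_nonneg (Cpow d t)); pose proof (Rabs_pos (ev (t + x))); nra.
Qed.

Lemma Cnorm2_lim_amp t x s : Cnorm2 (lim_amp t x s) = Cnorm2 (lim_coef x s) * ev (t + x).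
Proof.
  unfold lim_amp. rewrite !Cnorm2_mul, Cnorm2_pow, (nf_d _ _ _ _ _ _ Hnf), pow1, Cnorm2_RtoC.
  unfold ev; destruct (Nat.even (t + x)); ring.
Qed.

Definition lim_prob (t x : nat) : R :=
  ev (t + x) * match x with
               | O => Cnorm2 (lim_coef O false)
               | _ => Cnorm2 (lim_coef x true) + Cnorm2 (lim_coef x false)
               end.

Theorem prob_limit x : Un_cv (fun t => walk_prob cRR cLR cRL cLL ph t x - lim_prob t x) 0.
Proof.
  assert (H : forall s, Un_cv (fun t => Cnorm2 (amp cRR cLR cRL cLL ph t x s) - Cnorm2 (lim_amp t x s)) 0).
  { intros s. apply (Cnorm2_sub_null _ _ _ (fun t => lim_amp_bound t x s)), amp_limit. }
  destruct x as [|y].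
  - eapply Un_cv_ext; [|apply (H false)]. intros t; cbv beta. rewrite Cnorm2_lim_amp. unfold lim_prob, walk_prob; ring.
  - eapply Un_cv_ext; [|replace 0 with (0 + 0) by ring; apply (CV_plus _ _ _ _ (H true) (H false))].
    intros t; cbv beta. rewrite !Cnorm2_lim_amp. unfold lim_prob, walk_prob; ring.
Qed.

End ExplicitSolution.

(** * The two cases *)

Lemma ev_pow n : (1 + (-1) ^ n) / 2 = ev n.
Proof.
  unfold ev; induction n as [|n IH]; [simpl; field|].
  rewrite Nat.even_succ, <- Nat.negb_even. destruct (Nat.even n); simpl in *; lra.
Qed.

Lemma Cnorm2_div z w : w <> C0 -> Cnorm2 (Cdiv z w) = Cnorm2 z / Cnorm2 w.
Proof. intros Hw; unfold Cdiv; rewrite Cnorm2_mul, Cnorm2_inv by exact Hw; reflexivity. Qed.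

Lemma lim_prob_case_A cRR d b kappa t x : lim_prob cRR (RtoC 1) d b t x = limit_profile kappa 0 t x.
Proof.
  assert (Hell : ell (RtoC 1) b = C0) by (unfold ell, Cdiv; Cext).
  unfold lim_prob, lim_coef, limit_profile; rewrite Hell.
  destruct x; unfold Cnorm2; simpl; ring.
Qed.

Section CaseB.

Variables (kappa : nat) (cRR d : Cpx).
Hypothesis Hk : (3 <= kappa)%nat.
Let b := 2 / INR kappa - 1.
Hypothesis HRR : Cnorm2 cRR = 1 - b * b.
Hypothesis Hd : Cnorm2 d = 1.

Let K := INR kappa.

Lemma K_ge3 : 3 <= K.
Proof. unfold K; replace 3 with (INR 3) by (simpl; ring); apply le_INR, Hk. Qed.

Lemma b_bounds : -1 < b < 0.
Proof.
  pose proof K_ge3. unfold b; fold K; split.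
  - assert (0 < 2 / K) by (apply Rdiv_lt_0_compat; lra). lra.
  - apply Rlt_minus, (Rmult_lt_reg_r K); [lra|]. unfold Rdiv; rewrite Rmult_assoc, Rinv_l; lra.
Qed.

Lemma Cnorm2_m1_b : Cnorm2 (Cadd (RtoC (-1)) (RtoC b)) = (b - 1) * (b - 1).
Proof. unfold Cnorm2; simpl; ring. Qed.

Lemma Cnorm2_ell_B : Cnorm2 (ell (RtoC (-1)) b) = C_caseB kappa.
Proof.
  pose proof K_ge3. pose proof b_bounds.
  unfold ell, two_ph_b. rewrite Cnorm2_div.
  2:{ apply Cmul_neq0; [intros E; apply (f_equal Re) in E; simpl in E; lra|].
      intros E; apply (f_equal Re) in E; simpl in E; lra. }
  rewrite !Cnorm2_mul, Cnorm2_m1_b. unfold Cnorm2, C_caseB; simpl; fold K; unfold b; fold K.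
  field; lra.
Qed.

Lemma Cnorm2_Acoef_B : Cnorm2 (Acoef cRR (RtoC (-1)) b) = K - 1.
Proof.
  pose proof K_ge3. pose proof b_bounds.
  assert (cRR <> C0) by (apply Cneq0_of_norm2; rewrite HRR; nra).
  unfold Acoef. rewrite Cnorm2_div, Cnorm2_m1_b, HRR by assumption.
  unfold b; fold K. field; split; nra.
Qed.

Lemma Cnorm2_rcoef_B : Cnorm2 (rcoef cRR (RtoC (-1)) d b) = 1 / (K - 1).
Proof.
  pose proof K_ge3. pose proof b_bounds.
  assert (HA : Acoef cRR (RtoC (-1)) b <> C0) by (apply Cneq0_of_norm2; rewrite Cnorm2_Acoef_B; lra).
  assert (d <> C0) by (apply Cneq0_of_norm2; rewrite Hd; lra).
  unfold rcoef. rewrite Cnorm2_div by (apply Cmul_neq0; assumption).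
  rewrite Cnorm2_mul, Hd, Cnorm2_Acoef_B. unfold Cnorm2; simpl. field; lra.
Qed.

Lemma lim_prob_case_B t x : lim_prob cRR (RtoC (-1)) d b t x = limit_profile kappa (C_caseB kappa) t x.
Proof.
  unfold lim_prob, limit_profile, lim_coef. rewrite ev_pow.
  destruct x as [|y].
  - rewrite Nat.add_0_r, Cnorm2_mul, Cnorm2_ell_B, Cnorm2_pow; simpl; ring.
  - rewrite !Cnorm2_mul, Cnorm2_Acoef_B, Cnorm2_ell_B, Cnorm2_pow, Cnorm2_rcoef_B. fold K.
    unfold K; ring.
Qed.

End CaseB.

Lemma probY_walk_prob cRR cLR cRL cLL gamma t x :
  probY cRR cLR cRL cLL gamma t x = walk_prob cRR cLR cRL cLL (Cexpi gamma) t x.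
Proof. reflexivity. Qed.

Lemma Cexpi_0 : Cexpi 0 = RtoC 1.
Proof. unfold Cexpi, RtoC; rewrite cos_0, sin_0; reflexivity. Qed.

Lemma Cexpi_PI : Cexpi PI = RtoC (-1).
Proof. unfold Cexpi, RtoC; rewrite cos_PI, sin_PI; reflexivity. Qed.

Theorem corollary3 (kappa : nat) (cRR cLR cRL cLL : Cpx) (gamma : R) :
  (3 <= kappa)%nat ->
  unitary2 cRR cLR cRL cLL ->
  Cmul (Cconj cLR) (det2 cRR cLR cRL cLL) = RtoC (2 / INR kappa - 1) ->
  forall x : nat,
    (gamma = 0 ->
       Un_cv (fun t => probY cRR cLR cRL cLL gamma t x
                        - limit_profile kappa 0 t x) 0) /\
    (gamma = PI ->
       Un_cv (fun t => probY cRR cLR cRL cLL gamma t x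
                        - limit_profile kappa (C_caseB kappa) t x) 0).
Proof.
  intros Hk HU Hc x.
  destruct (coin_normal_form_of_unitary _ _ _ _ _ HU Hc) as [d Hnf].
  pose proof (b_bounds kappa Hk) as Hb.
  split; intros ->.
  - eapply Un_cv_ext; [|exact (prob_limit _ _ _ _ _ _ _ Hnf Hb (or_introl eq_refl) x)].
    intros t; rewrite probY_walk_prob, Cexpi_0, (lim_prob_case_A _ _ _ kappa); reflexivity.
  - eapply Un_cv_ext; [|exact (prob_limit _ _ _ _ _ _ _ Hnf Hb (or_intror eq_refl) x)].
    intros t; rewrite probY_walk_prob, Cexpi_PI,
      (lim_prob_case_B kappa cRR d Hk (nf_RR _ _ _ _ _ _ Hnf) (nf_d _ _ _ _ _ _ Hnf)); reflexivity.
Qed.
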